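(* Let $n\ge 2$ and let $k_n$ be the maximum diameter of a connected component of the cyclic shift graph $K({\mathsf{plac}}_n)$. Then $n-1\le k_n\le 2n-3$.
   Context: Let $\mathcal{A}=\{1<2<3<\cdots\}$ be the ordered alphabet of positive integers and $\mathcal{A}_n=\{1<2<\cdots<n\}$. For a monoid $M$ and $s,t\in M$, write $s\sim t$ if there exist $x,y\in M$ with $s=xy$ and $t=yx$ (a cyclic shift); $\sim^*$ is the reflexive–transitive closure of $\sim$. The cyclic shift graph $K(M)$ is the undirected graph with vertex set $M$ and an edge between $s$ and $t$ iff $s\sim t$; its connected components are the $\sim^*$-classes, and distances/diameters are graph distances in $K(M)$. The evaluation of a word $w$ is the tuple $(|w|_a)_{a}$ giving the number of occurrences of each letter $a$; all monoids considered are defined by presentations whose defining relations preserve evaluation, so the evaluation of an element is well defined, and $s\equiv_{\mathrm{ev}} t$ means $s$ and $t$ have the same evaluation. The plactic monoid of rank $n$, ${\mathsf{plac}}_n$, is $\mathcal{A}_n^*$ modulo the congruence generated by the Knuth relations $acb=cab$ for letters $a\le b<c$ and $bac=bca$ for letters $a<b\le c$ (all letters in $\mathcal{A}_n$). It is known (and may be used) that connected components of $K({\mathsf{plac}}_n)$ are exactly the $\equiv_{\mathrm{ev}}$-classes, and that elements of ${\mathsf{plac}}_n$ correspond bijectively to semistandard Young tableaux with entries in $\mathcal{A}_n$ via Schensted insertion. *)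

From Stdlib Require Import Relations.
From mathcomp Require Import all_boot.
Set Implicit Arguments. Unset Strict Implicit. Unset Printing Implicit Defensive.

Definition word_n (n : nat) (w : seq nat) : bool :=
  all (fun a => (1 <= a) && (a <= n)) w.

Definition knuth_step (n : nat) (u v : seq nat) : Prop :=
  exists (x y : seq nat) (a b c : nat),
    word_n n x /\ word_n n y /\ word_n n [:: a; b; c] /\
    ((a <= b < c /\ u = x ++ [:: a; c; b] ++ y /\ v = x ++ [:: c; a; b] ++ y) \/
     (a < b <= c /\ u = x ++ [:: b; a; c] ++ y /\ v = x ++ [:: b; c; a] ++ y)).

(* The plactic congruence on A_n^* : the congruence generated by the Knuth
   relations, i.e. the reflexive-symmetric-transitive closure of the
   contextual moves. Elements of plac_n are its classes. *)
Definition plac_eq (n : nat) : relation (seq nat) :=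
  clos_refl_sym_trans (seq nat) (knuth_step n).

(* Cyclic shift s ~ t in plac_n, lifted to representative words:
   [u] = [x][y] and [v] = [y][x] for some x, y in plac_n. *)
Definition cyc (n : nat) (u v : seq nat) : Prop :=
  exists x y : seq nat, word_n n x /\ word_n n y /\
    plac_eq n u (x ++ y) /\ plac_eq n v (y ++ x).

(* reach n k u v : the classes [u], [v] are joined by a path of length
   at most k in K(plac_n). *)
Fixpoint reach (n k : nat) (u v : seq nat) : Prop :=
  match k with
  | 0 => plac_eq n u v
  | S k' => reach n k' u v \/ exists w, word_n n w /\ reach n k' u w /\ cyc n w v
  end.

Definition connected (n : nat) (u v : seq nat) : Prop :=
  clos_refl_trans (seq nat) (cyc n) u v.

Definition dist (n : nat) (u v : seq nat) (d : nat) : Prop :=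
  reach n d u v /\ forall d', reach n d' u v -> d <= d'.

Definition comp_diameter (n : nat) (u : seq nat) (D : nat) : Prop :=
  (forall v w, word_n n v -> word_n n w -> connected n u v -> connected n u w ->
     exists d, dist n v w d /\ d <= D) /\
  (exists v w, word_n n v /\ word_n n w /\ connected n u v /\ connected n u w /\
     dist n v w D).

Definition max_comp_diameter (n K : nat) : Prop :=
  (forall u, word_n n u -> exists D, comp_diameter n u D) /\
  (forall u D, word_n n u -> comp_diameter n u D -> D <= K) /\
  (exists u, word_n n u /\ comp_diameter n u K).

From Stdlib Require Import Relations Classical Wf_nat.
From mathcomp Require Import all_boot zify.
Set Implicit Arguments. Unset Strict Implicit. Unset Printing Implicit Defensive.

(* Components of K(plac_n) are the evaluation classes.  Upper bound: write
   P_k = 1^{c_1} ... k^{c_k} for the letter counts c_i of u.  If u is plactically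
   P_{k-1} w with all letters of w at least k, row-inserting w into the row
   P_{k-1} never bumps a letter k, so P_{k-1} w = A P_k B with A, B > k, and one
   cyclic shift gives P_k (B A).  After n - 2 shifts u becomes P_{n-2} w with w
   over {n-1, n}; two such words of equal evaluation are plactically
   n^a M n^b and n^a' M n^b' with M = P_{n-2} (n-1)^c and a + b = a' + b', hence
   one shift apart.  So the distance is at most 2(n - 2) + 1.
   Lower bound: on standard words, the number of i such that i + 1 occurs left
   of i is invariant under the Knuth relations and changes by at most one under
   a cyclic shift; it is 0 on 12...n and n - 1 on n...21. *)

Lemma sorted_cat_le s x t : sorted leq s -> all (fun a => a <= x) s ->
  path leq x t -> sorted leq (s ++ x :: t).
Proof.
case: s => [|a s] // Ss Sx Pt; rewrite /= in Ss.
by rewrite /= cat_path Ss /= Pt andbT (allP Sx _ (mem_last a s)).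
Qed.

Lemma sorted_split x s : sorted leq s ->
  exists s1 s2, s = s1 ++ s2 /\ all (fun a => a <= x) s1 /\ all (fun a => x < a) s2.
Proof.
elim: s => [|y s IH] Ss; first by exists [::], [::].
have [Ss' Sy] := (path_sorted Ss, order_path_min leq_trans Ss).
case: (leqP y x) => Hyx.
  have [s1 [s2 [-> [H1 H2]]]] := IH Ss'.
  by exists (y :: s1), s2; rewrite /= Hyx.
exists [::], (y :: s); split => //=; rewrite Hyx /=; split => //.
by apply/allP => z /(allP Sy); apply: leq_trans.
Qed.

Lemma nseq_cat_absorb m c B1 x B2 : m <= x -> all (fun a => m < a <= x) B1 ->
  nseq c m ++ B1 ++ x :: B2 = nseq (c + (x == m)) m ++ (if x == m then B2 else B1 ++ x :: B2).
Proof.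
have [-> _|_ _] := eqVneq x m; last by rewrite addn0.
case: B1 => [|a B1] /=; last by rewrite ltnNge => /andP[/andP[/negP]].
by rewrite nseqD -catA.
Qed.

(** * Row insertion in the plactic monoid *)

Section Plactic.
Variable n : nat.

Lemma word_n_cat s t : word_n n (s ++ t) = word_n n s && word_n n t.
Proof. exact: all_cat. Qed.

Lemma word_n_nseq k a : 0 < a <= n -> word_n n (nseq k a).
Proof. by move=> Ha; apply/allP => z; rewrite mem_nseq => /andP[_ /eqP ->]. Qed.

Lemma word_n_range lo w : 0 < lo -> all (fun a => lo <= a <= n) w -> word_n n w.
Proof. by move=> Hlo; apply: sub_all => a /andP[/(leq_trans Hlo) ->]. Qed.

Lemma plac_refl u : plac_eq n u u. Proof. exact: rst_refl. Qed.
Lemma plac_sym u v : plac_eq n u v -> plac_eq n v u. Proof. exact: rst_sym. Qed.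
Lemma plac_trans u v w : plac_eq n u v -> plac_eq n v w -> plac_eq n u w.
Proof. exact: rst_trans. Qed.

Lemma plac_cat l r u v : word_n n l -> word_n n r -> plac_eq n u v ->
  plac_eq n (l ++ u ++ r) (l ++ v ++ r).
Proof.
move=> Wl Wr; elim=> {u v} [u v [x [y [a [b [c [Wx [Wy [Wabc Huv]]]]]]]]|u|u v _|u v w _ H1 _ H2].
- apply: rst_step; exists (l ++ x), (y ++ r), a, b, c.
  rewrite !word_n_cat Wl Wx Wy Wr; do 3 split => //.
  by case: Huv => [[? [-> ->]]|[? [-> ->]]]; [left|right]; rewrite !catA.
- exact: plac_refl.
- exact: plac_sym.
- exact: plac_trans H1 H2.
Qed.

Lemma plac_catl l u v : word_n n l -> plac_eq n u v -> plac_eq n (l ++ u) (l ++ v).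
Proof. by move=> Wl /(plac_cat Wl (isT : word_n n [::])); rewrite !cats0. Qed.

Lemma plac_catr r u v : word_n n r -> plac_eq n u v -> plac_eq n (u ++ r) (v ++ r).
Proof. exact: plac_cat (isT : word_n n [::]). Qed.

Lemma plac_knuth_acb a b c : word_n n [:: a; b; c] -> a <= b < c ->
  plac_eq n [:: a; c; b] [:: c; a; b].
Proof.
move=> W H; apply: rst_step; exists [::], [::], a, b, c; do 3 split => //.
by left; rewrite cats0.
Qed.

Lemma plac_knuth_bac a b c : word_n n [:: a; b; c] -> a < b <= c ->
  plac_eq n [:: b; a; c] [:: b; c; a].
Proof.
move=> W H; apply: rst_step; exists [::], [::], a, b, c; do 3 split => //.
by right; rewrite cats0.
Qed.

Lemma plac_slide_left p R x : sorted leq (p :: R) -> x < p -> word_n n (x :: p :: R) ->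
  plac_eq n (p :: R ++ [:: x]) (p :: x :: R).
Proof.
elim: R p => [|r R IH] p /=; first by move=> *; exact: plac_refl.
move=> /andP[Hpr Sr] Hxp /and4P[Wx Wp Wr WR].
apply: plac_trans (_ : plac_eq n (p :: r :: x :: R) _).
  apply: (plac_catl (l := [:: p])); first by rewrite /= Wp.
  by apply: IH; rewrite /= ?Wx ?Wr //; apply: leq_trans Hpr.
apply: plac_sym; apply: (plac_catr (u := [:: p; x; r]) (v := [:: p; r; x]) WR).
by apply: plac_knuth_bac; rewrite /= ?Wx ?Wp ?Wr ?Hxp.
Qed.

Lemma plac_bump_front R t b : sorted leq R -> all (fun s => s <= t) R -> t < b ->
  word_n n (t :: b :: R) -> plac_eq n (R ++ [:: b; t]) (b :: R ++ [:: t]).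
Proof.
elim: R => [|s R IH] /=; first by move=> *; exact: plac_refl.
move=> Ss /andP[Hst Ht] Htb /and4P[Wt Wb Ws WR].
apply: plac_trans (_ : plac_eq n (s :: b :: R ++ [:: t]) _).
  apply: (plac_catl (l := [:: s])); first by rewrite /= Ws.
  by apply: IH; rewrite /= ?Wt ?Wb //; exact: path_sorted Ss.
have [r [z [Erz Hsr Hrt Wr Wz]]] : exists r z, [/\ R ++ [:: t] = r :: z, s <= r, r <= t,
    0 < r <= n & word_n n z].
  case: (R) Ss Ht WR => [|r R0] /=; first by exists t, [::]; rewrite Hst Wt.
  move=> /andP[Hsr _] /andP[Hrt _] /andP[Wr WR].
  by exists r, (R0 ++ [:: t]); rewrite Hsr Hrt Wr word_n_cat WR /= Wt.
rewrite Erz; apply: (plac_catr (u := [:: s; b; r]) (v := [:: b; s; r]) Wz).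
apply: plac_knuth_acb.
  by rewrite /= Ws Wr Wb.
by rewrite Hsr (leq_ltn_trans Hrt Htb).
Qed.

Lemma plac_row_bump R1 b R2 x : sorted leq R1 -> all (fun s => s <= x) R1 -> x < b ->
  sorted leq (b :: R2) -> word_n n (x :: b :: R1 ++ R2) ->
  plac_eq n (R1 ++ b :: R2 ++ [:: x]) (b :: R1 ++ x :: R2).
Proof.
move=> S1 H1 Hxb S2 /= /and3P[Wx Wb]; rewrite word_n_cat => /andP[W1 W2].
apply: plac_trans (_ : plac_eq n (R1 ++ b :: x :: R2) _).
  by apply: plac_catl => //; apply: plac_slide_left; rewrite //= Wx Wb.
have := plac_catr W2 (plac_bump_front S1 H1 Hxb _).
by rewrite -!catA /= -catA /=; apply; rewrite /= Wx Wb.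
Qed.

Lemma plac_row_insert Q B x : sorted leq (Q ++ B) -> all (fun a => a <= x) Q ->
  all (fun a => x < a) B -> word_n n (x :: Q ++ B) ->
  exists E B', B = E ++ B' /\ plac_eq n (Q ++ B ++ [:: x]) (E ++ Q ++ x :: B').
Proof.
case: B => [|b B] SQB HQ HB W; first by exists [::], [::]; split; last exact: plac_refl.
exists [:: b], B; split => //; move: HB W => /andP[Hxb _] /=.
rewrite word_n_cat => /and3P[Wx WQ /andP[Wb WB]].
apply: plac_row_bump; rewrite /= ?Wx ?Wb ?word_n_cat ?WQ //.
- exact: (cat_sorted2 SQB).1.
- exact: (cat_sorted2 SQB).2.
Qed.

(* Schensted insertion of w into the row P: a letter m is never bumped, since all
   letters inserted after it are at least m; the bumped letters form A. *)
Lemma plac_insert_word m P w : 0 < m <= n -> word_n n P -> sorted leq P ->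
  all (fun a => a < m) P -> all (fun a => m <= a <= n) w ->
  exists A B, all (fun a => m < a <= n) (A ++ B) /\
    sorted leq (P ++ nseq (count_mem m w) m ++ B) /\
    plac_eq n (P ++ w) (A ++ P ++ nseq (count_mem m w) m ++ B).
Proof.
move=> /andP[Hm0 Hmn] WP SP HP; elim/last_ind: w => [|w x IH].
  by exists [::], [::]; rewrite /= !cats0; split; last split; last exact: plac_refl.
rewrite -cats1 all_cat /= andbT => /andP[Rw /andP[Hmx Hxn]].
have [A [B [RAB [SB PB]]]] := IH Rw.
set c := count_mem m w in SB PB.
have [B1 [B2 [EB [HB1 HB2]]]] := sorted_split x (cat_sorted2 (cat_sorted2 SB).2).2.
have RB : all (fun a => m < a <= n) B by move: RAB; rewrite all_cat => /andP[].
have RB12 : all (fun a => m < a <= n) (B1 ++ B2) by rewrite -EB.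
set Q := P ++ nseq c m ++ B1.
have HQ : all (fun a => a <= x) Q.
  rewrite !all_cat HB1 andbT; apply/andP; split.
    by apply: sub_all HP => a /ltnW /leq_trans; apply.
  by apply/allP => a; rewrite mem_nseq => /andP[_ /eqP ->].
have WQB2 : word_n n (x :: Q ++ B2).
  rewrite /= (leq_trans Hm0 Hmx) Hxn !word_n_cat WP word_n_nseq ?Hm0 ?Hmn //= -word_n_cat.
  exact: word_n_range RB12.
have SQB2 : sorted leq (Q ++ B2) by move: SB; rewrite EB /Q -!catA.
have [E [B2' [EB2 PE]]] := plac_row_insert SQB2 HQ HB2 WQB2.
exists (A ++ E), (if x == m then B2' else B1 ++ x :: B2').
rewrite count_cat /= addn0 -nseq_cat_absorb //; last first.
  apply/allP => a Ha; have /andP[-> _] : m < a <= n by apply: (allP RB12); rewrite mem_cat Ha.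
  exact: (allP HB1).
rewrite -/c -catA (_ : P ++ nseq c m ++ B1 ++ x :: B2' = Q ++ x :: B2'); last first.
  by rewrite /Q -!catA.
have RE : all (fun a => m < a <= n) (E ++ B2') by move: RB12; rewrite EB2 all_cat => /andP[].
split; last split.
- move: RAB RE RB12; rewrite !all_cat => /andP[-> _] /andP[-> RB2'] /andP[RB1 _] /=.
  case: eqP => [//|/eqP Hxm].
  by rewrite all_cat RB1 /= RB2' Hxn !andbT ltn_neqAle eq_sym Hxm Hmx.
- apply: sorted_cat_le => //; first exact: (cat_sorted2 SQB2).1.
  move: SQB2 HB2; rewrite EB2 (path_sortedE leq_trans) catA => /cat_sorted2[_ ->].
  by rewrite all_cat andbT => /andP[_]; apply: sub_all => a /ltnW.
- rewrite catA; apply: plac_trans (plac_catr _ PB) _; first by rewrite /= Hxn (leq_trans Hm0 Hmx).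
  have WA : word_n n A by move: RAB; rewrite all_cat => /andP[/(@word_n_range m.+1)->].
  by move: (plac_catl WA PE); rewrite EB /Q -!catA.
Qed.

Lemma plac_perm u v : plac_eq n u v -> perm_eq u v.
Proof.
elim=> {u v} [u v [x [y [a [b [c [_ [_ [_ [[_ [-> ->]]|[_ [-> ->]]]]]]]]]]]|u|u v _|u v w _ H1 _ H2].
- by rewrite perm_cat2l perm_cat2r (perm_catCA [:: a] [:: c] [:: b]).
- by rewrite perm_cat2l perm_cat2r perm_cons (perm_catC [:: a] [:: c]).
- exact: perm_refl.
- by rewrite perm_sym.
- exact: perm_trans H1 H2.
Qed.

Lemma cyc_perm u v : cyc n u v -> perm_eq u v.
Proof.
move=> [x [y [_ [_ [/plac_perm Hu /plac_perm Hv]]]]].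
by rewrite (perm_trans Hu) // perm_catC perm_sym.
Qed.

Lemma cyc_sym u v : cyc n u v -> cyc n v u.
Proof. by move=> [x [y [Wx [Wy [H1 H2]]]]]; exists y, x. Qed.

Lemma cyc_plac u u' v v' : plac_eq n u' u -> plac_eq n v v' -> cyc n u v -> cyc n u' v'.
Proof.
move=> Hu Hv [x [y [Wx [Wy [H1 H2]]]]]; exists x, y; do 3 split => //.
  exact: plac_trans Hu H1.
exact: plac_trans (plac_sym Hv) H2.
Qed.

Lemma reach_cyc u v : word_n n u -> cyc n u v -> reach n 1 u v.
Proof. by move=> Wu Huv; right; exists u; split => //; split; first exact: plac_refl. Qed.

Lemma reach_plac_r a u v v' : reach n a u v -> plac_eq n v v' -> reach n a u v'.
Proof.
elim: a v v' => [|a IH] v v' /= H Hv; first exact: plac_trans H Hv.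
case: H => [H|[w [Ww [H1 H2]]]]; first by left; exact: IH H Hv.
by right; exists w; do 2 split => //; exact: cyc_plac (plac_refl _) Hv H2.
Qed.

Lemma reach_trans a b u w v : reach n a u w -> reach n b w v -> reach n (a + b) u v.
Proof.
move=> H1; elim: b v => [|b IH] v /= H2; first by rewrite addn0; exact: reach_plac_r H1 H2.
rewrite addnS; case: H2 => [H2|[z [Wz [H2 H3]]]]; first by left; exact: IH.
by right; exists z; do 2 split => //; exact: IH.
Qed.

Lemma reach_sym a u v : word_n n v -> reach n a u v -> reach n a v u.
Proof.
elim: a u v => [|a IH] u v Wv /= H; first exact: plac_sym.
case: H => [H|[z [Wz [H1 H2]]]]; first by left; exact: IH.
by have := reach_trans (reach_cyc Wv (cyc_sym H2)) (IH _ _ Wz H1).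
Qed.

Lemma reach_perm a u v : reach n a u v -> perm_eq u v.
Proof.
elim: a v => [|a IH] v /= H; first exact: plac_perm.
case: H => [H|[z [Wz [H1 H2]]]]; first exact: IH.
exact: perm_trans (IH _ H1) (cyc_perm H2).
Qed.

Lemma reach_connected a u v : word_n n u -> reach n a u v -> connected n u v.
Proof.
move=> Wu; elim: a v => [|a IH] v /= H.
  apply: rt_step; exists u, [::]; rewrite cats0; do 3 split => //; first exact: plac_refl.
  exact: plac_sym.
case: H => [H|[z [Wz [H1 H2]]]]; first exact: IH.
exact: rt_trans (IH _ H1) (rt_step _ _ _ _ H2).
Qed.

Lemma connected_perm u v : connected n u v -> perm_eq u v.
Proof.
elim=> {u v} [u v|u|u v w _ H1 _ H2]; [exact: cyc_perm | exact: perm_refl |].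
exact: perm_trans H1 H2.
Qed.

End Plactic.

(** * The upper bound *)

Fixpoint row_upto (u : seq nat) (k : nat) : seq nat :=
  if k is k'.+1 then row_upto u k' ++ nseq (count_mem k'.+1 u) k'.+1 else [::].

Lemma row_upto_range u k : all (fun a => 0 < a <= k) (row_upto u k).
Proof.
elim: k => [|k IH] //=; rewrite all_cat; apply/andP; split.
  by apply: sub_all IH => a /andP[-> /leqW].
by apply/allP => a; rewrite mem_nseq => /andP[_ /eqP ->]; rewrite leqnn.
Qed.

Lemma row_upto_sorted u k : sorted leq (row_upto u k).
Proof.
elim: k => [|k IH] //=; case: (count_mem k.+1 u) => [|c]; first by rewrite cats0.
apply: sorted_cat_le => //; last by elim: c => //= c ->; rewrite leqnn.
by apply: sub_all (row_upto_range u k) => a /andP[_ /leqW].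
Qed.

Lemma row_upto_perm u v k : perm_eq u v -> row_upto u k = row_upto v k.
Proof. by move/permP => Huv; elim: k => [|k IH] //=; rewrite IH Huv. Qed.

Lemma count_row_upto u k j : k < j -> count_mem j (row_upto u k) = 0.
Proof.
move=> Hkj; apply/count_memPn/negP => /(allP (row_upto_range u k)) /andP[_].
by rewrite leqNgt Hkj.
Qed.

Section UpperBound.
Variable n : nat.

Lemma word_n_row_upto u k : k <= n -> word_n n (row_upto u k).
Proof. by move=> Hk; apply: sub_all (row_upto_range u k) => a /andP[-> /leq_trans ->]. Qed.

Lemma reach_row_upto k u : k <= n -> word_n n u ->
  exists w, all (fun a => k < a <= n) w /\ reach n k u (row_upto u k ++ w).
Proof.
elim: k => [|k IH] Hk Wu; first by exists u; split; last exact: plac_refl.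
have [w [Rw Ruw]] := IH (ltnW Hk) Wu.
set P := row_upto u k in Ruw.
have WP : word_n n P := word_n_row_upto u (ltnW Hk).
have HP : all (fun a => a < k.+1) P by apply: sub_all (row_upto_range u k) => a /andP[].
have [A [B [RAB [_ PB]]]] := plac_insert_word (m := k.+1) Hk WP (row_upto_sorted u k) HP Rw.
have Hcount : count_mem k.+1 w = count_mem k.+1 u.
  by rewrite (permP (reach_perm Ruw)) count_cat count_row_upto.
rewrite Hcount in PB.
have [WA WB] : word_n n A /\ word_n n B.
  by apply/andP; rewrite -word_n_cat; exact: (@word_n_range n k.+2).
exists (B ++ A); split; first by rewrite all_cat andbC -all_cat.
right; exists (P ++ w); split; first by rewrite word_n_cat WP (@word_n_range n k.+1).
split => //; exists A, (P ++ nseq (count_mem k.+1 u) k.+1 ++ B).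
rewrite !word_n_cat WA WP WB word_n_nseq ?Hk //; do 3 split => //.
by rewrite /= -/P -!catA; exact: plac_refl.
Qed.

Lemma cyc_nseq_rotate c a b a' b' M : 0 < c <= n -> word_n n M -> a + b = a' + b' ->
  cyc n (nseq a c ++ M ++ nseq b c) (nseq a' c ++ M ++ nseq b' c).
Proof.
move=> Hc WM; wlog le_a'a : a b a' b' / a' <= a => [wlog_le Hab|].
  case: (leqP a' a) => [le_a'a|/ltnW le_aa']; first exact: wlog_le.
  exact: cyc_sym (wlog_le _ _ _ _ le_aa' (esym Hab)).
move=> Hab; rewrite -(subnK le_a'a) (_ : b' = b + (a - a')); last by lia.
exists (nseq (a - a') c), (nseq a' c ++ M ++ nseq b c).
rewrite !word_n_cat !word_n_nseq // WM !nseqD -!catA; do 3 split => //; exact: plac_refl.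
Qed.

Lemma nseq_top A : all (fun a => n.-1 < a <= n) A -> A = nseq (size A) n.
Proof.
move=> HA; apply/all_pred1P; apply: sub_all HA => a /andP[Ha Han].
by apply/eqP; lia.
Qed.

Lemma cyc_top_letters P w w' : 2 <= n -> word_n n P -> sorted leq P ->
  all (fun a => a < n.-1) P -> all (fun a => n.-1 <= a <= n) w -> perm_eq w w' ->
  cyc n (P ++ w) (P ++ w').
Proof.
move=> Hn WP SP HP Rw Hww'.
have Rw' : all (fun a => n.-1 <= a <= n) w' by rewrite -(perm_all _ Hww').
have Hm : 0 < n.-1 <= n by rewrite leq_pred; case: (n) Hn => [|[]].
have [A [B [RAB [_ PB]]]] := plac_insert_word Hm WP SP HP Rw.
have [A' [B' [RAB' [_ PB']]]] := plac_insert_word Hm WP SP HP Rw'.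
rewrite -(permP Hww') in PB'.
have Hsize : size A + size B = size A' + size B'.
  have /perm_size := plac_perm PB; have /perm_size := plac_perm PB'.
  rewrite !size_cat (perm_size Hww') !(addnCA _ (size P)) => /addnI -> /addnI.
  by rewrite !(addnCA _ (size (nseq _ _))) => /addnI.
move: RAB RAB'; rewrite !all_cat => /andP[/nseq_top EA /nseq_top EB] /andP[/nseq_top EA' /nseq_top EB'].
apply: cyc_plac PB (plac_sym PB') _; rewrite EA EB EA' EB' !(catA P).
apply: cyc_nseq_rotate; first by rewrite leqnn andbT (leq_trans _ Hn).
  by rewrite word_n_cat WP word_n_nseq.
exact: Hsize.
Qed.

Lemma reach_perm_eq u v : 2 <= n -> word_n n u -> word_n n v -> perm_eq u v ->
  reach n (2 * n - 3) u v.
Proof.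
move=> Hn Wu Wv Huv.
have Hk : n - 2 <= n := leq_subr 2 n.
have [w [Rw Ruw]] := reach_row_upto Hk Wu.
have [w' [Rw' Rvw']] := reach_row_upto Hk Wv.
rewrite -(row_upto_perm _ Huv) in Rvw'.
set P := row_upto u (n - 2) in Ruw Rvw'.
have Hww' : perm_eq w w'.
  rewrite -(perm_cat2l P); have := reach_perm Ruw; rewrite perm_sym => /perm_trans; apply.
  exact: perm_trans Huv (reach_perm Rvw').
have HP : all (fun a => a < n.-1) P.
  by apply: sub_all (row_upto_range u _) => a /andP[_]; lia.
have [WPw WPw'] : word_n n (P ++ w) /\ word_n n (P ++ w').
  by rewrite !word_n_cat word_n_row_upto // !(@word_n_range n (n - 2).+1).
have Hcyc : cyc n (P ++ w) (P ++ w').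
  apply: cyc_top_letters => //; first exact: word_n_row_upto.
    exact: row_upto_sorted.
  by apply: sub_all Rw => a; lia.
have := reach_trans (reach_trans Ruw (reach_cyc WPw Hcyc)) (reach_sym WPw' Rvw').
by rewrite (_ : n - 2 + 1 + (n - 2) = 2 * n - 3) //; lia.
Qed.
End UpperBound.

(** * The lower bound *)

Definition descents (n : nat) (w : seq nat) : nat :=
  \sum_(1 <= i < n) (index i.+1 w < index i w : nat).

Lemma index_swap_lt s1 s2 a c i : a.+1 < c ->
  (index i.+1 (s1 ++ a :: c :: s2) < index i (s1 ++ a :: c :: s2)) =
  (index i.+1 (s1 ++ c :: a :: s2) < index i (s1 ++ c :: a :: s2)).
Proof.
move=> Hac; rewrite !index_cat /=.
have := index_mem i s1; have := index_mem i.+1 s1.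
case: (i \in s1); case: (i.+1 \in s1); case: (a =P i); case: (c =P i);
  case: (a =P i.+1); case: (c =P i.+1) => /=; lia.
Qed.

Lemma uniq_catl_catr (s t r : seq nat) : uniq (s ++ t ++ r) -> uniq t.
Proof. by rewrite !cat_uniq => /and3P[_ _ /and3P[]]. Qed.

Lemma descents_knuth n m u v : knuth_step m u v -> uniq u -> descents n u = descents n v.
Proof.
move=> [x [y [a [b [c [_ [_ [_ H]]]]]]]].
case: H => [[Habc [-> ->]]|[Habc [-> ->]]] /uniq_catl_catr /=;
  rewrite !inE => /and3P[/norP[Hac Hab] Hcb _]; apply: eq_big_nat => i _; congr nat_of_bool.
- by apply: index_swap_lt; move: Habc Hab => /andP[]; lia.
- rewrite -[x ++ _]/(x ++ [:: b] ++ [:: a, c & y]) -[x ++ [:: b; c; a] ++ y]/(x ++ [:: b] ++ [:: c, a & y]).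
  by rewrite !catA; apply: index_swap_lt; move: Habc Hcb => /andP[]; lia.
Qed.

Lemma descents_plac n m u v : plac_eq m u v -> uniq u -> descents n u = descents n v.
Proof.
elim=> {u v} [u v|//|u v H IH Uv|u v w H1 IH1 _ IH2 Uu]; first exact: descents_knuth.
  by rewrite IH // (perm_uniq (plac_perm H)).
by rewrite IH1 // IH2 // -(perm_uniq (plac_perm H1)).
Qed.

Lemma sum_switches (g : nat -> bool) a b : a <= b ->
  \sum_(a <= i < b) (g i && ~~ g i.+1 : nat) + g b =
  \sum_(a <= i < b) (~~ g i && g i.+1 : nat) + g a.
Proof.
elim: b => [|b IH]; first by rewrite leqn0 => /eqP ->; rewrite !big_geq.
rewrite leq_eqVlt => /orP[/eqP ->|Hab]; first by rewrite !big_geq.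
rewrite !big_nat_recr //=; have := IH Hab.
by case: (g b); case: (g b.+1) => /=; lia.
Qed.

Lemma descent_rotate x y i : uniq (x ++ y) -> i \in x ++ y -> i.+1 \in x ++ y ->
  (index i.+1 (y ++ x) < index i (y ++ x) : nat) + (~~ (i \in x) && (i.+1 \in x) : nat) =
  (index i.+1 (x ++ y) < index i (x ++ y) : nat) + ((i \in x) && ~~ (i.+1 \in x) : nat).
Proof.
rewrite cat_uniq => /and3P[_ /hasPn Hyx _]; rewrite !mem_cat !index_cat.
have Hxy p : p \in x -> (p \in y) = false by move=> Hp; apply/negP => /Hyx; rewrite Hp.
have := index_mem i x; have := index_mem i.+1 x; have := index_mem i y; have := index_mem i.+1 y.
case Ex: (i \in x); case Ex1: (i.+1 \in x);
  rewrite ?(Hxy _ Ex) ?(Hxy _ Ex1) /=; case: (i \in y); case: (i.+1 \in y) => //=; lia.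
Qed.

Lemma descents_rotate n x y : uniq (x ++ y) -> (forall i, 0 < i <= n -> i \in x ++ y) ->
  descents n (y ++ x) <= descents n (x ++ y) + 1.
Proof.
move=> U Hxy; case: n Hxy => [|m] Hxy; first by rewrite /descents big_geq.
have E : descents m.+1 (y ++ x) + \sum_(1 <= i < m.+1) (~~ (i \in x) && (i.+1 \in x) : nat) =
         descents m.+1 (x ++ y) + \sum_(1 <= i < m.+1) ((i \in x) && ~~ (i.+1 \in x) : nat).
  (* only the i with exactly one of i, i + 1 in x change status *)
  rewrite /descents -!big_split; apply: eq_big_nat => i /andP[H1 H2].
  by apply: descent_rotate => //; apply: Hxy; lia.
have := sum_switches (fun i => i \in x) (isT : 1 <= m.+1).
by move: E; case: (1 \in x); case: (m.+1 \in x) => /=; lia.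
Qed.

Lemma descents_cyc n u v : cyc n u v -> perm_eq u (iota 1 n) -> descents n v <= descents n u + 1.
Proof.
move=> [x [y [_ [_ [H1 H2]]]]] Hu.
have Pxy := plac_perm H1.
have Uxy : uniq (x ++ y) by rewrite -(perm_uniq Pxy) (perm_uniq Hu) iota_uniq.
rewrite (descents_plac _ H1) ?(perm_uniq Hu) ?iota_uniq // (descents_plac _ H2).
  apply: descents_rotate => // i Hi.
  by rewrite -(perm_mem Pxy) (perm_mem Hu) mem_iota add1n ltnS.
by rewrite (perm_uniq (plac_perm H2)) uniq_catC.
Qed.

Lemma descents_reach n d u v : reach n d u v -> perm_eq u (iota 1 n) ->
  descents n v <= descents n u + d.
Proof.
elim: d v => [|d IH] v /= H Hu.
  by rewrite (descents_plac _ H) ?addn0 // (perm_uniq Hu) iota_uniq.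
case: H => [/IH /(_ Hu)|[z [_ [H1 H2]]]]; first by rewrite addnS => /leqW.
have Hz : perm_eq z (iota 1 n) by rewrite -(permPl (reach_perm H1)).
by rewrite addnS -addn1 (leq_trans (descents_cyc H2 Hz)) // leq_add2r IH.
Qed.

Lemma index_iota1 n j : 0 < j <= n -> index j (iota 1 n) = j.-1.
Proof.
move=> /andP[Hj Hjn]; have Hlt : j.-1 < size (iota 1 n) by rewrite size_iota; lia.
have Hnth : nth 0 (iota 1 n) j.-1 = j by rewrite nth_iota ?add1n ?prednK // -(size_iota 1 n).
by rewrite -{1}Hnth index_uniq ?iota_uniq.
Qed.

Lemma index_rev_iota1 n j : 0 < j <= n -> index j (rev (iota 1 n)) = n - j.
Proof.
move=> /andP[Hj Hjn]; have Hlt : n - j < size (iota 1 n) by rewrite size_iota; lia.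
have Hnth : nth 0 (rev (iota 1 n)) (n - j) = j.
  rewrite nth_rev // size_iota nth_iota; lia.
by rewrite -{1}Hnth index_uniq ?rev_uniq ?iota_uniq ?size_rev.
Qed.

Lemma descents_iota n : descents n (iota 1 n) = 0.
Proof.
rewrite /descents big_nat_cond big1 // => i /andP[/andP[H1 H2] _].
by rewrite !index_iota1 /=; lia.
Qed.

Lemma descents_rev_iota n : descents n (rev (iota 1 n)) = n - 1.
Proof.
rewrite /descents (eq_big_nat _ _ (F2 := fun => 1)) ?sum_nat_const_nat ?muln1 // => i /andP[H1 H2].
by rewrite !index_rev_iota1 /=; lia.
Qed.

(* [reach] is not decidable, so least and greatest values are obtained classically. *)
Lemma ex_least (P : nat -> Prop) k : P k -> exists d, P d /\ forall d', P d' -> d <= d'.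
Proof.
move=> Pk; have [d [[Pd Hd] _]] :=
  @dec_inh_nat_subset_has_unique_least_element P (fun m => classic (P m)) (ex_intro _ k Pk).
by exists d; split => // d' /Hd /leP.
Qed.

Lemma ex_greatest (P : nat -> Prop) a b : P a -> (forall x, P x -> x <= b) ->
  exists K, P K /\ forall x, P x -> x <= K.
Proof.
elim: b => [|b IH] Pa Hb.
  by exists a; split => // x /Hb; rewrite leqn0 => /eqP ->.
have [Pb|NPb] := classic (P b.+1); first by exists b.+1.
apply: IH => // x Px; move: (Hb x Px); rewrite leq_eqVlt => /orP[/eqP Ex|//].
by rewrite Ex in Px.
Qed.

Section Diameter.
Variable n : nat.
Hypothesis n_ge2 : 2 <= n.

Lemma dist_exists u v : word_n n u -> word_n n v -> perm_eq u v -> exists d, dist n u v d.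
Proof.
move=> Wu Wv Huv; have Ruv := reach_perm_eq n_ge2 Wu Wv Huv.
by have [d Hd] := ex_least (P := fun d => reach n d u v) Ruv; exists d.
Qed.

Lemma dist_le u v d : word_n n u -> word_n n v -> perm_eq u v -> dist n u v d -> d <= 2 * n - 3.
Proof. by move=> Wu Wv Huv [_]; apply; exact: reach_perm_eq. Qed.

Lemma connected_perm2 u v w : connected n u v -> connected n u w -> perm_eq v w.
Proof. by move=> /connected_perm/permPl <- /connected_perm. Qed.

Lemma comp_diameter_exists u : word_n n u -> exists D, comp_diameter n u D.
Proof.
move=> Wu; pose diam D := exists v w, word_n n v /\ word_n n w /\ connected n u v /\
  connected n u w /\ dist n v w D.
have diam0 : diam 0.
  exists u, u; do 2 split => //; do 2 (split; first exact: rt_refl).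
  by split; [exact: plac_refl | move=> *].
have diam_le D : diam D -> D <= 2 * n - 3.
  by move=> [v [w [Wv [Ww [Cv [Cw Hd]]]]]]; apply: dist_le Wv Ww (connected_perm2 Cv Cw) Hd.
have [D [diamD HD]] := ex_greatest diam0 diam_le.
exists D; split => // v w Wv Ww Cv Cw.
have [d Hd] := dist_exists Wv Ww (connected_perm2 Cv Cw).
by exists d; split => //; apply: HD; exists v, w.
Qed.

Lemma comp_diameter_le u D : comp_diameter n u D -> D <= 2 * n - 3.
Proof.
by move=> [_ [v [w [Wv [Ww [Cv [Cw Hd]]]]]]]; apply: dist_le Wv Ww (connected_perm2 Cv Cw) Hd.
Qed.

Lemma max_comp_diameter_exists : exists K, max_comp_diameter n K.
Proof.
pose diam K := exists u, word_n n u /\ comp_diameter n u K.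
have [D0 HD0] := comp_diameter_exists (isT : word_n n [::]).
have diam_le K : diam K -> K <= 2 * n - 3 by move=> [u [_ /comp_diameter_le]].
have diamD0 : diam D0 by exists [::].
have [K [diamK HK]] := ex_greatest (P := diam) diamD0 diam_le.
exists K; split; first exact: comp_diameter_exists.
by split => // u D Wu HD; apply: HK; exists u.
Qed.

Lemma max_comp_diameter_ge K : max_comp_diameter n K -> n - 1 <= K.
Proof.
move=> [_ [HK _]]; set r := iota 1 n.
have Wr : word_n n r by apply/allP => a; rewrite mem_iota; lia.
have Wc : word_n n (rev r) by rewrite /word_n all_rev.
have Prc : perm_eq r (rev r) by rewrite perm_sym perm_rev.
have [D HrD] := comp_diameter_exists Wr.
have [d [[Rd _] HdD]] := HrD.1 r (rev r) Wr Wc (rt_refl _ _ _)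
  (reach_connected Wr (reach_perm_eq n_ge2 Wr Wc Prc)).
have := descents_reach Rd (perm_refl r); rewrite descents_iota descents_rev_iota add0n => Hd.
exact: leq_trans Hd (leq_trans HdD (HK r D Wr HrD)).
Qed.

End Diameter.

Theorem mainTheorem2 (n : nat) (hn : 2 <= n) :
  exists k : nat, max_comp_diameter n k /\ n - 1 <= k /\ k <= 2 * n - 3.
Proof.
have [K HK] := max_comp_diameter_exists hn.
exists K; split; first exact: HK.
split; first exact: (max_comp_diameter_ge hn HK).
by have [_ [_ [u [_ /(comp_diameter_le hn)]]]] := HK.
Qed.
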